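(* Let $P,Q$ be finite posets and $R$ an indecomposable commutative unital ring. If $I^3(P,R)$ and $I^3(Q,R)$ are isomorphic as $R$-algebras (via an $R$-linear multiplicative bijection), then $P$ and $Q$ are isomorphic posets.
   Context: A commutative ring $R$ is indecomposable if its only idempotents are $0$ and $1$. For a finite poset $P$, let $P^3_\le=\{(x,y,z)\in P^3: x\le y\le z\}$. The third partial flag incidence algebra $I^3(P,R)$ is the $R$-module of all functions $f:P^3_\le\to R$ (pointwise operations) with the (non-associative) multiplication $(fg)(x_1,x_2,x_3)=\sum f(x_1,y_1,y_2)\,g(y_1,y_2,x_3)$, the sum over all $y_1,y_2$ with $x_1\le y_1\le x_2\le y_2\le x_3$. *)

From HB Require Import structures.
From mathcomp Require Import all_boot all_order all_algebra.
Set Implicit Arguments. Unset Strict Implicit. Unset Printing Implicit Defensive.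
Import Order.TTheory GRing.Theory.
Local Open Scope order_scope.

Section Flag.
Variables (d : Order.disp_t) (P : finPOrderType d).

Definition flag3_pred : pred (P * P * P) :=
  fun t => (t.1.1 <= t.1.2) && (t.1.2 <= t.2).

Definition flag3 := {t : P * P * P | flag3_pred t}.

Variable R : comNzRingType.

Definition I3 := {ffun flag3 -> R^o}.

Definition ext3 (f : I3) (t : P * P * P) : R :=
  match @insub _ flag3_pred flag3 t with Some s => f s | None => 0%R end.

Definition mul3 (f g : I3) : I3 :=
  [ffun s : flag3 =>
     (\sum_(y1 : P) \sum_(y2 : P |
         [&& (val s).1.1 <= y1, y1 <= (val s).1.2, (val s).1.2 <= y2
           & y2 <= (val s).2]%O)
        ext3 f ((val s).1.1, y1, y2) * ext3 g (y1, y2, (val s).2))%R].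
End Flag.

HB.instance Definition _ (d : Order.disp_t) (P : finPOrderType d)
  (R : comNzRingType) := GRing.Lmodule.copy (I3 P R) {ffun flag3 P -> R^o}.


Definition indecomposable (R : comNzRingType) : Prop :=
  forall e : R, (e * e = e)%R -> e = 0%R \/ e = 1%R.

Definition poset_iso (d1 d2 : Order.disp_t)
  (P : finPOrderType d1) (Q : finPOrderType d2) : Prop :=
  exists h : P -> Q, bijective h /\ {mono h : x y / x <= y}.

From HB Require Import structures.
From mathcomp Require Import all_boot all_order all_algebra.
Set Implicit Arguments. Unset Strict Implicit. Unset Printing Implicit Defensive.
Import Order.TTheory GRing.Theory.
Local Open Scope ring_scope.

(* The characters of I^3(P,R), i.e. the nonzero R-linear multiplicative maps
   to R, are exactly the evaluations f |-> f(x,x,x) at diagonal points.  On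
   the basis of delta functions a character vanishes off the diagonal, since
   every off-diagonal delta absorbs a diagonal delta on one side and is killed
   by it on the other; its values on the diagonal deltas are pairwise
   orthogonal idempotents, not all zero, so indecomposability of R leaves
   exactly one of them equal to 1.  An isomorphism I^3(P,R) ~ I^3(Q,R) thus
   matches the points of P and Q through their characters.  The matching is
   monotone both ways because x <= y is algebraic: it holds iff for all f, g
   with f(x,x,x) = g(y,y,y) = 1 some product (((f k1) k2) k3) g is nonzero. *)

Lemma sum_pair_delta (T : finType) (V : nmodType) (a b : T) (F : T -> T -> V) :
  \sum_x \sum_y (if (x == a) && (y == b) then F x y else 0) = F a b.
Proof.
rewrite (bigD1 a) //= [X in _ + X]big1 => [|x /negbTE xa]; last first.
  by apply: big1 => y _; rewrite xa.
by rewrite addr0 (bigD1 b) //= !eqxx big1 ?addr0 // => y /negbTE ->; rewrite andbF.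
Qed.

Definition ext3_at d (P : finPOrderType d) (R : comNzRingType) (u : P * P * P)
  (f : I3 P R) : R^o := ext3 f u.

Lemma ext3_at_linear d (P : finPOrderType d) (R : comNzRingType) (u : P * P * P) :
  linear (@ext3_at d P R u).
Proof.
move=> c f g; rewrite /ext3_at /ext3.
by case: insubP => [s _ _|_]; rewrite ?ffunE // scaler0 addr0.
Qed.

HB.instance Definition _ d (P : finPOrderType d) (R : comNzRingType) u :=
  GRing.isLinear.Build R (I3 P R) R^o *:%R (@ext3_at d P R u) (ext3_at_linear u).

Section FlagAlgebra.
Variables (d : Order.disp_t) (P : finPOrderType d) (R : comNzRingType).
Implicit Types (f g h k : I3 P R) (z : P).

Definition delta3 (t : P * P * P) : I3 P R := [ffun s => (val s == t)%:R].

Lemma ext3_val f (s : flag3 P) : ext3 f (val s) = f s.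
Proof. by rewrite /ext3 valK. Qed.

Lemma ext30 u : ext3 (0 : I3 P R) u = 0.
Proof. exact: (linear0 (ext3_at u)). Qed.

Lemma I3_ext f g : (forall u, ext3 f u = ext3 g u) -> f = g.
Proof. by move=> fg; apply/ffunP => s; rewrite -!ext3_val fg. Qed.

Lemma ext3_delta3 t u : ext3 (delta3 t) u = (flag3_pred u && (u == t))%:R.
Proof.
by rewrite /ext3; case: insubP => [s _ <-|/negbTE ->] //; rewrite ffunE (valP s).
Qed.

Lemma ext3_delta3_diag z : ext3 (delta3 (z, z, z)) (z, z, z) = 1.
Proof. by rewrite ext3_delta3 /flag3_pred /= lexx eqxx. Qed.

Lemma delta3_expansion f : f = \sum_(s : flag3 P) f s *: delta3 (val s).
Proof.
apply/ffunP => s; rewrite sum_ffunE (bigD1 s) //= big1 => [|s' s's].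
  by rewrite !ffunE eqxx [_ *: _]mulr1 addr0.
by rewrite !ffunE (inj_eq val_inj) eq_sym (negbTE s's) [_ *: _]mulr0.
Qed.

Lemma ext3_mul3 f g u : ext3 (mul3 f g) u =
  if flag3_pred u then
    \sum_(y1 : P) \sum_(y2 : P | [&& u.1.1 <= y1, y1 <= u.1.2, u.1.2 <= y2 & y2 <= u.2]%O)
       ext3 f (u.1.1, y1, y2) * ext3 g (y1, y2, u.2)
  else 0.
Proof.
by rewrite /ext3; case: insubP => [s _ <-|/negbTE ->] //; rewrite ffunE (valP s).
Qed.

Lemma ext3_mul3_delta3 h (t u : P * P * P) : ext3 (mul3 h (delta3 t)) u =
  if [&& u.2 == t.2, u.1.1 <= t.1.1, t.1.1 <= u.1.2, u.1.2 <= t.1.2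
       & t.1.2 <= u.2]%O
  then ext3 h (u.1.1, t.1.1, t.1.2) else 0.
Proof.
case: t => [[t1 t2] t3]; case: u => [[u1 u2] u3] /=.
rewrite ext3_mul3 -(sum_pair_delta t1 t2
  (fun y1 y2 => if [&& u3 == t3, u1 <= y1, y1 <= u2, u2 <= y2 & y2 <= u3]%O
                then ext3 h (u1, y1, y2) else 0)) /flag3_pred /=.
case: ifP => [_|not_flag].
  apply: eq_bigr => y1 _; rewrite big_mkcond; apply: eq_bigr => y2 _.
  rewrite ext3_delta3 /flag3_pred /= !xpair_eqE.
  case: (eqVneq y1 t1) => [->|_]; case: (eqVneq y2 t2) => [->|_];
    case: (eqVneq u3 t3) => [->|_]; rewrite ?andbF ?andbT ?mulr0 //=;
    by case: ifP => // /and4P [_ t1u2 u2t2 ->]; rewrite (le_trans t1u2 u2t2) mulr1.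
rewrite big1 // => y1 _; rewrite big1 // => y2 _.
case: ifP => // _; case: ifP => // /and5P [_ u1y1 y1u2 u2y2 y2u3].
by rewrite (le_trans u1y1 y1u2) (le_trans u2y2 y2u3) in not_flag.
Qed.

Lemma ext3_mul3_abb f g a b : (a <= b)%O ->
  ext3 (mul3 f g) (a, b, b) =
  \sum_(z | (a <= z <= b)%O) ext3 f (a, z, b) * ext3 g (z, b, b).
Proof.
move=> ab; rewrite ext3_mul3 /flag3_pred /= ab lexx [RHS]big_mkcond /=.
apply: eq_bigr => z _; case: ifP => [/andP [-> ->] | azb] /=.
  by rewrite (big_pred1 b) // => y; rewrite /= eq_le andbC.
by rewrite big_pred0 // => y; rewrite andbA azb.
Qed.

Lemma ext3_mul3_diag f g z :
  ext3 (mul3 f g) (z, z, z) = ext3 f (z, z, z) * ext3 g (z, z, z).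
Proof. by rewrite ext3_mul3_abb // (big_pred1 z) // => y; rewrite /= eq_sym eq_le. Qed.

Lemma mul3_delta3_eq0 a b c a' b' c' : (a', b') != (b, c) ->
  mul3 (delta3 (a, b, c)) (delta3 (a', b', c')) = 0.
Proof.
rewrite xpair_eqE => /negbTE head_tail; apply: I3_ext => u.
rewrite ext3_mul3_delta3 ext30 ext3_delta3.
by case: ifP => // _; rewrite /= !xpair_eqE -andbA head_tail !andbF.
Qed.

Lemma mul3_delta3_pinch a b e : (a <= b)%O -> (b <= e)%O ->
  mul3 (delta3 (a, b, b)) (delta3 (b, b, e)) = delta3 (a, b, e).
Proof.
move=> ab be; apply: I3_ext => [[[u1 u2] u3]].
rewrite ext3_mul3_delta3 !ext3_delta3 /flag3_pred /=.
case: (eqVneq (u1, u2, u3) (a, b, e)) => [[-> -> ->]|ne].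
  by rewrite ab be !lexx !eqxx.
rewrite andbF; case: ifP => // /and5P [/eqP u3e _ bu2 u2b _].
have u2b' : u2 = b by apply/le_anti; rewrite bu2 u2b.
by move: ne; rewrite u2b' u3e !xpair_eqE !eqxx !andbT => /negbTE ->; rewrite andbF.
Qed.

Lemma ext3_mul3_row0 h k a : (forall b c, ext3 h (a, b, c) = 0) ->
  forall b c, ext3 (mul3 h k) (a, b, c) = 0.
Proof.
move=> row0 b c; rewrite ext3_mul3; case: ifP => // _.
by apply: big1 => y1 _; apply: big1 => y2 _; rewrite row0 mul0r.
Qed.

End FlagAlgebra.

Arguments delta3 {d P R} t.
Arguments mul3_delta3_pinch {d P R a b e}.

Section Character.
Variables (d : Order.disp_t) (P : finPOrderType d) (R : comNzRingType).
Variable chi : {linear I3 P R -> R^o}.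
Hypothesis chiM : {morph chi : f g / mul3 f g >-> (f * g)%R}.
Implicit Types (f g : I3 P R) (x z : P).

Lemma char_mul3C f g : chi (mul3 f g) = chi (mul3 g f).
Proof. by rewrite !chiM mulrC. Qed.

Lemma char_delta3_offdiag a b c : (a <= b <= c)%O -> (a != b) || (b != c) ->
  chi (delta3 (a, b, c)) = 0.
Proof.
case/andP => ab bc; case: (eqVneq a b) ab bc => [<- _ ac /= ac' | ab' ab bc _].
  rewrite -(mul3_delta3_pinch (lexx a) ac) char_mul3C mul3_delta3_eq0 ?linear0 //.
  by rewrite xpair_eqE eqxx.
have chi_abb : chi (delta3 (a, b, b)) = 0.
  rewrite -(mul3_delta3_pinch ab (lexx b)) char_mul3C mul3_delta3_eq0 ?linear0 //.
  by rewrite xpair_eqE eqxx andbT.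
by rewrite -(mul3_delta3_pinch ab bc) chiM chi_abb mul0r.
Qed.

Lemma char_delta3_diag_orth x z : x != z ->
  chi (delta3 (z, z, z)) * chi (delta3 (x, x, x)) = 0.
Proof.
move=> xz; rewrite -chiM mul3_delta3_eq0 ?linear0 //.
by rewrite xpair_eqE (negbTE xz).
Qed.

Lemma char_delta3_support (t : flag3 P) : chi (delta3 (val t)) != 0 ->
  exists x, val t = (x, x, x).
Proof.
case: t => [[[a b] c] flag_abc] /= nz; exists c.
have : ~~ ((a != b) || (b != c)).
  by apply: contra nz => off; rewrite char_delta3_offdiag.
by rewrite negb_or !negbK => /andP [/eqP -> /eqP ->].
Qed.

Hypothesis Rind : indecomposable R.

Lemma char_delta3_diag z : chi (delta3 (z, z, z)) = 0 \/ chi (delta3 (z, z, z)) = 1.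
Proof. by apply: Rind; rewrite -chiM mul3_delta3_pinch ?lexx. Qed.

Lemma char_eval : (exists f, chi f != 0) -> exists x, forall f, chi f = ext3 f (x, x, x).
Proof.
case=> f0 nz_f0.
have chi_expand f : chi f = \sum_(s : flag3 P) f s * chi (delta3 (val s)).
  by rewrite {1}(delta3_expansion f) linear_sum; apply: eq_bigr => s _; rewrite linearZ.
have [s nz_s] : exists s : flag3 P, chi (delta3 (val s)) != 0.
  apply/existsP; apply: contraNT nz_f0 => /existsPn chi0.
  by rewrite chi_expand big1 // => s _; rewrite (eqP (negbNE (chi0 s))) mulr0.
have [x sx] := char_delta3_support nz_s.
have chi_x1 : chi (delta3 (x, x, x)) = 1.
  by case: (char_delta3_diag x) => // chi0; move: nz_s; rewrite sx chi0 eqxx.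
exists x => f; rewrite chi_expand (bigD1 s) //= sx chi_x1 mulr1 -sx ext3_val.
rewrite big1 ?addr0 // => s' s's; case: (eqVneq (chi (delta3 (val s'))) 0) => [->|nz].
  by rewrite mulr0.
have [z s'z] := char_delta3_support nz; move: nz; rewrite s'z.
rewrite -[chi _]mulr1 -chi_x1 char_delta3_diag_orth ?eqxx //.
by apply: contra s's => /eqP xz; rewrite -(inj_eq val_inj) sx s'z xz.
Qed.

End Character.

Section Linked.
Variables (d : Order.disp_t) (P : finPOrderType d) (R : comNzRingType).

Definition linked (x y : P) : Prop := forall f g : I3 P R,
  ext3 f (x, x, x) = 1 -> ext3 g (y, y, y) = 1 ->
  exists k1 k2 k3 : I3 P R, mul3 (mul3 (mul3 (mul3 f k1) k2) k3) g != 0.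

Lemma linked_le x y : linked x y -> (x <= y)%O.
Proof.
move=> lk; apply/negPn/negP => nxy.
have [k1 [k2 [k3]]] := lk _ _ (ext3_delta3_diag R x) (ext3_delta3_diag R y).
set h := mul3 (mul3 _ k2) k3.
have h_row0 u1 : u1 != x -> forall b c, ext3 h (u1, b, c) = 0.
  move=> u1x; do 3 apply: ext3_mul3_row0.
  by move=> b c; rewrite ext3_delta3 !xpair_eqE (negbTE u1x) andbF.
move/negP; apply; apply/eqP/I3_ext => [[[u1 u2] u3]].
rewrite ext3_mul3_delta3 ext30 /=; case: ifP => // /and5P [_ u1y _ _ _].
by rewrite h_row0 //; apply: contraNneq nxy => <-.
Qed.

Lemma le_linked x y : (x <= y)%O -> linked x y.
Proof.
move=> xy f g fx gy.
exists (delta3 (x, x, y)), (delta3 (x, y, y)), (delta3 (y, y, y)).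
set h := mul3 (mul3 (mul3 f _) _) _.
have h_row z : ext3 h (x, z, y) = (z == y)%:R.
  rewrite !ext3_mul3_delta3 /= !eqxx !lexx xy fx /= andbT -eq_le [y == z]eq_sym.
  by case: (z == y).
have : ext3 (mul3 h g) (x, y, y) = 1.
  rewrite ext3_mul3_abb // (bigD1 y) ?xy ?lexx //= h_row eqxx mul1r gy.
  by rewrite big1 ?addr0 // => z /andP [_ /negbTE zy]; rewrite h_row zy mul0r.
by apply: contra_eqN => /eqP ->; rewrite ext30 eq_sym oner_eq0.
Qed.

End Linked.

Lemma poset_iso_of_rel d1 d2 (P : finPOrderType d1) (Q : finPOrderType d2)
    (rel : P -> Q -> Prop) :
  (forall x, exists y, rel x y) -> (forall y, exists x, rel x y) ->
  (forall x y x' y', rel x x' -> rel y y' -> (x' <= y')%O = (x <= y)%O) ->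
  poset_iso P Q.
Proof.
move=> total surj mono.
have [h rel_h] := fin_all_exists total; have [h' rel_h'] := fin_all_exists surj.
have rel_injl x x' y : rel x y -> rel x' y -> x = x'.
  move=> rxy rx'y; apply/le_anti.
  by rewrite -(mono _ _ _ _ rxy rx'y) -(mono _ _ _ _ rx'y rxy) lexx.
have rel_injr x y y' : rel x y -> rel x y' -> y = y'.
  move=> rxy rxy'; apply/le_anti.
  by rewrite (mono _ _ _ _ rxy rxy') (mono _ _ _ _ rxy' rxy) lexx.
exists h; split=> [|x y]; last exact: mono.
by exists h' => [x|y]; [exact: rel_injl (rel_h' (h x)) (rel_h x) |
                         exact: rel_injr (rel_h (h' y)) (rel_h' y)].
Qed.

Definition diag_paired d1 d2 (P : finPOrderType d1) (Q : finPOrderType d2)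
    (R : comNzRingType) (phi : I3 P R -> I3 Q R) (x : P) (y : Q) : Prop :=
  forall f, ext3 (phi f) (y, y, y) = ext3 f (x, x, x).

Section Transport.
Variables (d1 d2 : Order.disp_t) (P : finPOrderType d1) (Q : finPOrderType d2).
Variables (R : comNzRingType) (phi : {linear I3 P R -> I3 Q R}) (psi : I3 Q R -> I3 P R).
Hypotheses (phiM : {morph phi : f g / mul3 f g}) (psiK : cancel psi phi).

Lemma diag_paired_sym x y : diag_paired phi x y -> diag_paired psi y x.
Proof. by move=> pxy g; rewrite -pxy psiK. Qed.

Lemma diag_paired_le x y x' y' : diag_paired phi x x' -> diag_paired phi y y' ->
  (x' <= y')%O -> (x <= y)%O.
Proof.
move=> pxx' pyy' /(le_linked (R := R)) lk; apply: linked_le => f g fx gy.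
have [k1 [k2 [k3 nz]]] := lk (phi f) (phi g) (etrans (pxx' f) fx) (etrans (pyy' g) gy).
exists (psi k1), (psi k2), (psi k3); apply: contraNneq nz => prod0.
by rewrite -[k1]psiK -[k2]psiK -[k3]psiK -!phiM prod0 linear0.
Qed.

Hypothesis Rind : indecomposable R.

Lemma diag_paired_exists y : exists x, diag_paired phi x y.
Proof.
apply: (char_eval (chi := ext3_at (y, y, y) \o phi)) => //.
- by move=> f g; rewrite /= /ext3_at phiM ext3_mul3_diag.
- by exists (psi (delta3 (y, y, y))); rewrite /= /ext3_at psiK ext3_delta3_diag oner_eq0.
Qed.

End Transport.

Theorem theorem3p5 (d1 d2 : Order.disp_t)
  (P : finPOrderType d1) (Q : finPOrderType d2) (R : comNzRingType) :
  indecomposable R ->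
  (exists phi : {linear I3 P R -> I3 Q R},
      bijective phi /\
      forall f g : I3 P R, phi (mul3 f g) = mul3 (phi f) (phi g)) ->
  poset_iso P Q.
Proof.
move=> Rind [phi [[psi phiK psiK] phiM]].
have psiM : {morph psi : f g / mul3 f g}.
  by move=> f g; apply: (canLR phiK); rewrite phiM !psiK.
pose psiL : {linear I3 Q R -> I3 P R} :=
  HB.pack psi (GRing.isLinear.Build _ _ _ _ psi (can2_linear phiK psiK)).
apply: (@poset_iso_of_rel _ _ _ _ (diag_paired phi)).
- move=> x; have [y pyx] := diag_paired_exists (phi := psiL) psiM phiK Rind x.
  by exists y; apply: (diag_paired_sym (phi := psiL)).
- exact: (diag_paired_exists phiM psiK Rind).
- move=> x y x' y' pxx' pyy'; apply/idP/idP; first exact: diag_paired_le.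
  by apply: (diag_paired_le (phi := psiL)) => //; apply: diag_paired_sym.
Qed.
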